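(* Let $\alpha=\{a_k\}_{k\ge1}$ be a sequence of positive integers with $a_k\to\infty$, let $j\ge2$, and suppose that for some $\rho>0$, $$L(x;\alpha;j)=\sum_{n=1}^\infty A_L(n)x^n=O\big((1-x)^{-\rho}\big)\qquad\text{as }x\to1^-.$$ Then there is $N_0$ with $\int_0^1 L(x;\alpha;j)F_{N_0}(x;\alpha)|\ln x|^{j-1}\frac{dx}{x}<\infty$, and consequently $\lim_{N\to\infty}E[U_j^N]=I(\alpha;j)<\infty$.
   Context: For $N\ge2$, coupon type $k\in\{1,\dots,N\}$ has probability $a_k/\sum_{i=1}^Na_i$; $U_j^N$ is the number of empty album places of the $j$-th collector when the first collector completes her set (each collector passes duplicates to the next one), with $$E[U_j^N]=\sum_{k=1}^N\int_0^\infty a_k e^{-a_k t}\frac{(a_kt)^{j-1}}{(j-1)!}\prod_{i\ne k,\,1\le i\le N}\big(1-e^{-a_i t}\big)\,dt.$$ $L(x;\alpha;j):=\sum_{k=1}^\infty a_k^j\frac{x^{a_k}}{1-x^{a_k}}$; with $A(m):=\#\{k:a_k=m\}$ this equals $\sum_{m\ge1}m^jA(m)\frac{x^m}{1-x^m}=\sum_{n\ge1}A_L(n)x^n$, $A_L(n):=\sum_{d\mid n}d^jA(d)$. $F_N(x;\alpha):=\prod_{k=1}^N(1-x^{a_k})$, $F(x;\alpha):=\prod_{k=1}^\infty(1-x^{a_k})$, $x_\alpha:=\inf\{x\in[0,1]:\sum_k x^{a_k}=\infty\}$, and $I(\alpha;j):=\frac{1}{(j-1)!}\int_0^{x_\alpha}L(x;\alpha;j)F(x;\alpha)|\ln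 x|^{j-1}\frac{dx}{x}$. *)

From Stdlib Require Import Reals Lra Lia Classical ClassicalEpsilon Factorial.
Open Scope R_scope.

(* The sequence alpha = (a_1, a_2, ...) is encoded 0-indexed:
   [a k] stands for a_{k+1}.  *)

Fixpoint sumR (f : nat -> R) (n : nat) : R :=
  match n with O => 0 | S m => sumR f m + f m end.
Fixpoint prodR (f : nat -> R) (n : nat) : R :=
  match n with O => 1 | S m => prodR f m * f m end.

Definition choiceR (P : R -> Prop) : R :=
  match excluded_middle_informative (exists x, P x) with
  | left H => proj1_sig (constructive_indefinite_description P H)
  | right _ => 0
  end.

(* limit of a real sequence (the value is only meaningful when it converges) *)
Definition Lim (u : nat -> R) : R := choiceR (Un_cv u).

Definition L_term (a : nat -> nat) (j : nat) (x : R) (k : nat) : R :=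
  INR (a k) ^ j * x ^ (a k) / (1 - x ^ (a k)).
Definition L_partial (a : nat -> nat) (j : nat) (x : R) (n : nat) : R :=
  sumR (L_term a j x) n.
Definition Lser (a : nat -> nat) (j : nat) (x : R) : R := Lim (L_partial a j x).

Definition F_N (a : nat -> nat) (N : nat) (x : R) : R :=
  prodR (fun k => 1 - x ^ (a k)) N.
Definition F_inf (a : nat -> nat) (x : R) : R := Lim (fun N => F_N a N x).

Definition sum_diverges (a : nat -> nat) (x : R) : Prop :=
  ~ (exists M, forall n, sumR (fun k => x ^ (a k)) n <= M).
Definition xalpha_set (a : nat -> nat) (x : R) : Prop :=
  0 <= x <= 1 /\ sum_diverges a x.
Definition is_inf (S : R -> Prop) (m : R) : Prop :=
  (forall y, S y -> m <= y) /\ (forall z, (forall y, S y -> z <= y) -> z <= m).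
Definition x_alpha (a : nat -> nat) : R := choiceR (is_inf (xalpha_set a)).

Definition improper_int (f : R -> R) (a b I : R) : Prop :=
  (forall c d, a < c -> c <= d -> d < b -> inhabited (Riemann_integrable f c d)) /\
  (forall eps, 0 < eps -> exists c0 d0, a < c0 < b /\ a < d0 < b /\
     forall c d (pr : Riemann_integrable f c d),
       a < c <= c0 -> d0 <= d < b -> c <= d -> Rabs (RiemannInt pr - I) < eps).

Definition improper_int_pinf (f : R -> R) (a I : R) : Prop :=
  (forall c d, a < c -> c <= d -> inhabited (Riemann_integrable f c d)) /\
  (forall eps, 0 < eps -> exists c0 d0, a < c0 /\
     forall c d (pr : Riemann_integrable f c d),
       a < c <= c0 -> d0 <= d -> c <= d -> Rabs (RiemannInt pr - I) < eps).

(* integrand of the k-th summand of E[U_j^N] (k, i range over 0..N-1) *)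
Definition EU_integrand (a : nat -> nat) (j N k : nat) (t : R) : R :=
  INR (a k) * exp (- (INR (a k) * t)) * ((INR (a k) * t) ^ (j - 1) / INR (fact (j - 1)))
  * prodR (fun i => if Nat.eqb i k then 1 else 1 - exp (- (INR (a i) * t))) N.

Definition I_integrand (a : nat -> nat) (j : nat) (x : R) : R :=
  / INR (fact (j - 1)) * (Lser a j x * F_inf a x * Rabs (ln x) ^ (j - 1) / x).

(* For x < 1 the series L converges and is increasing in x, so L(x) <= (x/p) L(p) for x <= p,
   while |ln x|^m <= 2^m m! / sqrt x; near 1 the hypothesis gives L(x) <= C (1-x)^{-rho}, and
   since 1 - x^a <= a (1-x) the product F_N vanishes like (1-x)^N.  Hence for N0 >= rho the
   integrand L F_{N0} |ln x|^{j-1} / x is O(x^{-1/2} + 1) on (0,1), which is integrable.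
   The substitution x = e^{-t} turns the k-th summand of E[U_j^N] into an integral over (0,1)
   whose integrands sum to L_N F_N |ln x|^{j-1} / ((j-1)! x), L_N the N-th partial sum of L.
   These converge to the integrand of I(alpha;j) uniformly on compact subintervals, with the
   tail of L as error, and for N >= N0 they are dominated by the integrable function above,
   so the integrals converge.  Convergence of L on [0,1) also forces x_alpha = 1. *)

From Pilot Require Import Defs.
From Stdlib Require Import Reals Lra Lia Classical ClassicalEpsilon Factorial.
From Coquelicot Require Import Coquelicot.
Open Scope R_scope.

Lemma sumR_ext f g n : (forall k, (k < n)%nat -> f k = g k) -> sumR f n = sumR g n.
Proof. induction n as [|n IH]; simpl; intros H; auto. rewrite IH, H; auto. Qed.

Lemma sumR_le f g n : (forall k, (k < n)%nat -> f k <= g k) -> sumR f n <= sumR g n.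
Proof.
  induction n as [|n IH]; simpl; intros H; [lra|].
  assert (f n <= g n) by auto. assert (sumR f n <= sumR g n) by auto. lra.
Qed.

Lemma sumR_nonneg f n : (forall k, (k < n)%nat -> 0 <= f k) -> 0 <= sumR f n.
Proof.
  induction n as [|n IH]; simpl; intros H; [lra|].
  assert (0 <= f n) by auto. assert (0 <= sumR f n) by auto. lra.
Qed.

Lemma sumR_le_index f n m : (forall k, 0 <= f k) -> (n <= m)%nat -> sumR f n <= sumR f m.
Proof. intros Hf Hnm; induction Hnm as [|m _ IH]; simpl; [lra|]. pose proof (Hf m). lra. Qed.

Lemma sumR_scal_l c f n : sumR (fun k => c * f k) n = c * sumR f n.
Proof. induction n as [|n IH]; simpl; [ring|]. rewrite IH; ring. Qed.

Lemma sumR_scal_r c f n : sumR (fun k => f k * c) n = sumR f n * c.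
Proof. induction n as [|n IH]; simpl; [ring|]. rewrite IH; ring. Qed.

Lemma prodR_ext f g n : (forall k, (k < n)%nat -> f k = g k) -> prodR f n = prodR g n.
Proof. induction n as [|n IH]; simpl; intros H; auto. rewrite IH, H; auto. Qed.

Lemma prodR_nonneg f n : (forall k, 0 <= f k) -> 0 <= prodR f n.
Proof. intros H; induction n as [|n IH]; simpl; [lra|]. pose proof (H n). nra. Qed.

Lemma prodR_in_01 f n : (forall k, 0 <= f k <= 1) -> 0 <= prodR f n <= 1.
Proof. intros H; induction n as [|n IH]; simpl; [lra|]. pose proof (H n). nra. Qed.

Lemma prodR_omit g k N : (k < N)%nat ->
  prodR (fun i => if Nat.eqb i k then 1 else g i) N * g k = prodR g N.
Proof.
  induction N as [|N IH]; intros Hk; [lia|]. simpl.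
  destruct (Nat.eq_dec k N) as [->|Hne].
  - rewrite Nat.eqb_refl, (prodR_ext _ g); [ring|].
    intros i Hi. destruct (Nat.eqb_spec i N); [lia|auto].
  - destruct (Nat.eqb_spec N k); [lia|]. rewrite <- IH by lia. ring.
Qed.

Lemma choiceR_spec (P : R -> Prop) : (exists x, P x) -> P (choiceR P).
Proof.
  intros H. unfold choiceR. destruct excluded_middle_informative as [e|n].
  - destruct constructive_indefinite_description as [l Hl]. exact Hl.
  - contradiction.
Qed.

Lemma Lim_eq u l : Un_cv u l -> Defs.Lim u = l.
Proof. intros H. unfold Defs.Lim. apply (UL_sequence u); [apply choiceR_spec|]; eauto. Qed.

Lemma Un_cv_const c : Un_cv (fun _ => c) c.
Proof. intros e He; exists O; intros; unfold R_dist; rewrite Rminus_diag, Rabs_R0; auto. Qed.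

Lemma continuous_Rplus (f g : R -> R) x :
  continuous f x -> continuous g x -> continuous (fun y => f y + g y) x.
Proof. apply (continuous_plus f g). Qed.

Lemma continuous_Rminus (f g : R -> R) x :
  continuous f x -> continuous g x -> continuous (fun y => f y - g y) x.
Proof. apply (continuous_minus f g). Qed.

Lemma continuous_Ropp (f : R -> R) x : continuous f x -> continuous (fun y => - f y) x.
Proof. apply (continuous_opp f). Qed.

Lemma continuous_Rmult (f g : R -> R) x :
  continuous f x -> continuous g x -> continuous (fun y => f y * g y) x.
Proof. apply (continuous_mult f g). Qed.

Lemma continuous_Rdiv (f g : R -> R) x :
  continuous f x -> continuous g x -> g x <> 0 -> continuous (fun y => f y / g y) x.
Proof. intros. apply continuous_Rmult; auto. apply continuous_Rinv_comp; auto. Qed.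

Lemma continuous_Rpow (f : R -> R) n x : continuous f x -> continuous (fun y => f y ^ n) x.
Proof.
  intros H; induction n as [|n IH]; simpl; [apply continuous_const|apply continuous_Rmult; auto].
Qed.

Lemma continuous_ln_comp (f : R -> R) x : continuous f x -> 0 < f x -> continuous (fun y => ln (f y)) x.
Proof. intros. apply (continuous_comp f ln); auto. apply continuous_ln; auto. Qed.

Lemma continuous_sumR (f : nat -> R -> R) n x : (forall k, (k < n)%nat -> continuous (f k) x) ->
  continuous (fun y => sumR (fun k => f k y) n) x.
Proof.
  induction n; intros H; simpl; [apply continuous_const|apply continuous_Rplus; auto].
Qed.

Lemma continuous_prodR (f : nat -> R -> R) n x : (forall k, (k < n)%nat -> continuous (f k) x) ->
  continuous (fun y => prodR (fun k => f k y) n) x.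
Proof.
  induction n; intros H; simpl; [apply continuous_const|apply continuous_Rmult; auto].
Qed.

Lemma continuous_uniform_limit (fn : nat -> R -> R) (f : R -> R) x r : 0 < r ->
  (forall n, continuous (fn n) x) ->
  (forall eps, 0 < eps -> exists N, forall y, Rabs (y - x) < r -> Rabs (fn N y - f y) < eps) ->
  continuous f x.
Proof.
  intros Hr Hc Hu. apply continuity_pt_filterlim. intros eps Heps.
  destruct (Hu (eps/3) ltac:(lra)) as [N HN].
  destruct (proj2 (continuity_pt_filterlim _ _) (Hc N) (eps/3) ltac:(lra)) as [alp [Halp H]].
  exists (Rmin alp r). split; [apply Rmin_pos; lra|].
  intros y [_ Hy]. simpl in *. unfold R_dist in *.
  assert (Hy1 : Rabs (y - x) < alp) by (eapply Rlt_le_trans; [apply Hy|apply Rmin_l]).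
  assert (Hy2 : Rabs (y - x) < r) by (eapply Rlt_le_trans; [apply Hy|apply Rmin_r]).
  assert (Hx : Rabs (x - x) < r) by (rewrite Rminus_diag, Rabs_R0; lra).
  destruct (Req_dec y x) as [->|Hne]; [rewrite Rminus_diag, Rabs_R0; lra|].
  specialize (H y (conj (conj I (not_eq_sym Hne)) Hy1)). simpl in H. unfold R_dist in H.
  pose proof (HN y Hy2) as HNy. pose proof (HN x Hx) as HNx.
  revert H HNy HNx. unfold Rabs; repeat destruct Rcase_abs; lra.
Qed.

Lemma exp_le_compat x y : x <= y -> exp x <= exp y.
Proof. intros H. destruct (Rle_lt_or_eq_dec _ _ H) as [h|h]; [left; apply exp_increasing; auto|rewrite h; lra]. Qed.

Lemma ln_nonpos x : 0 < x <= 1 -> ln x <= 0.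
Proof. intros H. rewrite <- ln_1. apply ln_le; lra. Qed.

Lemma one_sub_pow_in_01 x n : 0 <= x <= 1 -> 0 <= 1 - x ^ n <= 1.
Proof.
  intros Hx. assert (x ^ n <= 1) by (rewrite <- (pow1 n); apply pow_incr; lra).
  pose proof (pow_le x n ltac:(lra)). lra.
Qed.

Lemma one_sub_pow_le x n : 0 <= x <= 1 -> 1 - x ^ n <= INR n * (1 - x).
Proof.
  intros Hx. induction n as [|n IH]; [simpl; lra|].
  rewrite S_INR. simpl. pose proof (one_sub_pow_in_01 x n Hx). pose proof (pow_le x n ltac:(lra)).
  nra.
Qed.

(* [|ln x|^m / m! <= e^{|ln x|/2} 2^m = 2^m / sqrt x], from one term of the exponential series *)
Lemma pow_abs_ln_le m x : 0 < x <= 1 -> Rabs (ln x) ^ m <= 2 ^ m * INR (fact m) / sqrt x.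
Proof.
  intros Hx. pose proof (ln_nonpos x Hx).
  set (y := - ln x / 2).
  assert (Hy : 0 <= y) by (unfold y; lra).
  assert (Hexp : exp y = / sqrt x).
  { rewrite <- Rpower_sqrt, <- Rpower_Ropp by lra. unfold Rpower. f_equal. unfold y; field. }
  assert (Ht : y ^ m / INR (fact m) <= exp y).
  { eapply Rle_trans; [|apply (exp_ge_taylor y m Hy)].
    destruct m; [apply Rle_refl|]. simpl.
    assert (Hs : 0 <= sum_f_R0 (fun k => y ^ k / INR (fact k)) m).
    { apply cond_pos_sum. intros n. apply Rmult_le_pos; [apply pow_le; auto|].
      left; apply Rinv_0_lt_compat, lt_0_INR, lt_O_fact. }
    simpl in Hs. lra. }
  rewrite Rabs_left1 by lra.
  replace (- ln x) with (2 * y) by (unfold y; field).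
  rewrite Rpow_mult_distr.
  pose proof (lt_0_INR _ (lt_O_fact m)).
  rewrite Hexp in Ht.
  assert (y ^ m <= INR (fact m) * / sqrt x).
  { apply (Rmult_le_reg_r (/ INR (fact m))); [apply Rinv_0_lt_compat; auto|].
    replace (INR (fact m) * / sqrt x * / INR (fact m)) with (/ sqrt x)
      by (field; split; [lra|apply Rgt_not_eq, sqrt_lt_R0; lra]).
    exact Ht. }
  unfold Rdiv. rewrite Rmult_assoc. apply Rmult_le_compat_l; auto. apply pow_le; lra.
Qed.

Lemma Rpower_opp_mul_pow_le_1 y rho N : 0 < y < 1 -> rho <= INR N -> Rpower y (- rho) * y ^ N <= 1.
Proof.
  intros Hy Hr. rewrite <- (Rpower_pow N y), <- Rpower_plus by lra.
  unfold Rpower. rewrite <- exp_0.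
  assert (ln y < 0) by (rewrite <- ln_1; apply ln_increasing; lra).
  apply exp_le_compat. nra.
Qed.

Lemma exp_INR_mul_ln (n : nat) x : 0 < x -> exp (- (INR n * - ln x)) = x ^ n.
Proof. intros Hx. rewrite <- Rpower_pow by auto. unfold Rpower. f_equal. ring. Qed.

Lemma pow_abs_ln_div_le m c x : 0 < c <= x -> x <= 1 -> Rabs (ln x) ^ m / x <= Rabs (ln c) ^ m / c.
Proof.
  intros Hc Hx. unfold Rdiv. apply Rmult_le_compat.
  - apply pow_le, Rabs_pos.
  - left; apply Rinv_0_lt_compat; lra.
  - apply pow_incr. split; [apply Rabs_pos|].
    rewrite !Rabs_left1 by (apply ln_nonpos; lra). pose proof (ln_le c x ltac:(lra) ltac:(lra)). lra.
  - apply Rinv_le_contravar; lra.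
Qed.

(** * Improper integrals over an open interval *)

Definition ex_RInt_interior (f : R -> R) a b :=
  forall c d, a < c -> c <= d -> d < b -> ex_RInt f c d.

Definition is_improper_RInt (f : R -> R) a b I :=
  forall eps, 0 < eps -> exists c0 d0, a < c0 <= d0 /\ d0 < b /\
    forall c d, a < c <= c0 -> d0 <= d < b -> Rabs (RInt f c d - I) < eps.

Lemma ex_RInt_interior_continuous (f : R -> R) a b :
  (forall x, a < x < b -> continuous f x) -> ex_RInt_interior f a b.
Proof.
  intros H c d h1 h2 h3. apply (ex_RInt_continuous (V:=R_CompleteNormedModule)).
  intros z Hz. apply H. revert Hz; unfold Rmin, Rmax; repeat destruct Rle_dec; lra.
Qed.

Lemma RInt_Chasles3 f c c0 d0 d : ex_RInt f c c0 -> ex_RInt f c0 d0 -> ex_RInt f d0 d ->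
  RInt f c d = RInt f c c0 + RInt f c0 d0 + RInt f d0 d.
Proof.
  intros H1 H2 H3.
  rewrite <- (RInt_Chasles f c d0 d); [|apply ex_RInt_Chasles with c0|]; auto.
  rewrite <- (RInt_Chasles f c c0 d0); auto.
Qed.

Lemma Rmin_Rmax_window a b c0 c1 d0 d1 : a < c0 -> a < c1 -> d0 < b -> d1 < b ->
  a < Rmin c0 c1 /\ Rmin c0 c1 <= c0 /\ Rmin c0 c1 <= c1 /\
  Rmax d0 d1 < b /\ d0 <= Rmax d0 d1 /\ d1 <= Rmax d0 d1.
Proof. unfold Rmin, Rmax; repeat destruct Rle_dec; lra. Qed.

Section ImproperIntegral.

Variables a b : R.

(* the improper integral is the supremum of the integrals over compact subintervals *)
Lemma ex_improper_RInt_bounded f B : a < b -> ex_RInt_interior f a b ->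
  (forall x, a < x < b -> 0 <= f x) ->
  (forall c d, a < c -> c <= d -> d < b -> RInt f c d <= B) -> exists I, is_improper_RInt f a b I.
Proof.
  intros Hab Hf Hp HB.
  set (E := fun y => exists c d, a < c /\ c <= d /\ d < b /\ y = RInt f c d).
  assert (Hb : bound E) by (exists B; intros y (c & d & h1 & h2 & h3 & ->); auto).
  assert (Hn : exists y, E y) by (exists (RInt f ((a+b)/2) ((a+b)/2)), ((a+b)/2), ((a+b)/2); repeat split; lra).
  destruct (completeness E Hb Hn) as [m [Hm1 Hm2]].
  exists m. intros eps Heps.
  assert (exists y, E y /\ m - eps < y) as [y [(c0 & d0 & h1 & h2 & h3 & ->) Hy]].
  { apply NNPP; intro Hc. assert (m <= m - eps); [|lra]. apply Hm2. intros y Ey.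
    apply Rnot_lt_le. intro Hlt. apply Hc. exists y; auto. }
  exists c0, d0. repeat split; auto.
  intros c d [hc1 hc2] [hd1 hd2].
  assert (Hin : E (RInt f c d)) by (exists c, d; repeat split; lra).
  specialize (Hm1 _ Hin).
  rewrite (RInt_Chasles3 f c c0 d0 d) in *; try (apply Hf; lra).
  assert (0 <= RInt f c c0) by (apply RInt_ge_0; [lra|apply Hf; lra|intros; apply Hp; lra]).
  assert (0 <= RInt f d0 d) by (apply RInt_ge_0; [lra|apply Hf; lra|intros; apply Hp; lra]).
  apply Rabs_def1; lra.
Qed.

Lemma RInt_le_improper_RInt h Ih : ex_RInt_interior h a b -> (forall x, a < x < b -> 0 <= h x) ->
  is_improper_RInt h a b Ih -> forall c d, a < c -> c <= d -> d < b -> RInt h c d <= Ih.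
Proof.
  intros Hh Hp HI c d h1 h2 h3. apply Rnot_lt_le; intro Hlt.
  destruct (HI (RInt h c d - Ih) ltac:(lra)) as (c0 & d0 & k1 & k2 & k3).
  destruct (Rmin_Rmax_window a b c c0 d d0) as (q1 & q2 & q3 & r1 & r2 & r3); try lra.
  specialize (k3 (Rmin c c0) (Rmax d d0) ltac:(lra) ltac:(lra)).
  rewrite (RInt_Chasles3 h (Rmin c c0) c d (Rmax d d0)) in k3 by (apply Hh; lra).
  assert (0 <= RInt h (Rmin c c0) c) by (apply RInt_ge_0; [lra|apply Hh; lra|intros; apply Hp; lra]).
  assert (0 <= RInt h d (Rmax d d0)) by (apply RInt_ge_0; [lra|apply Hh; lra|intros; apply Hp; lra]).
  revert k3; unfold Rabs; destruct Rcase_abs; lra.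
Qed.

Lemma ex_improper_RInt_le f h Ih : a < b -> ex_RInt_interior f a b -> ex_RInt_interior h a b ->
  (forall x, a < x < b -> 0 <= f x <= h x) -> is_improper_RInt h a b Ih ->
  exists I, is_improper_RInt f a b I.
Proof.
  intros Hab Hf Hh Hfh HI. apply (ex_improper_RInt_bounded f Ih); auto.
  - intros x Hx; apply Hfh; auto.
  - intros c d h1 h2 h3. apply Rle_trans with (RInt h c d).
    + apply RInt_le; [lra|apply Hf; lra|apply Hh; lra|]. intros; apply Hfh; lra.
    + apply (RInt_le_improper_RInt h Ih); auto. intros x Hx; pose proof (Hfh x Hx); lra.
Qed.

Lemma is_improper_RInt_ext f g I : (forall x, a < x < b -> f x = g x) ->
  is_improper_RInt f a b I -> is_improper_RInt g a b I.
Proof.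
  intros He HI eps Heps. destruct (HI eps Heps) as (c0 & d0 & h1 & h2 & h3).
  exists c0, d0. repeat split; try lra. intros c d hc hd.
  rewrite <- (RInt_ext f g); [apply h3; auto|].
  intros x Hx. apply He. revert Hx; unfold Rmin, Rmax; repeat destruct Rle_dec; lra.
Qed.

Lemma is_improper_RInt_plus f g I J : ex_RInt_interior f a b -> ex_RInt_interior g a b ->
  is_improper_RInt f a b I -> is_improper_RInt g a b J -> is_improper_RInt (fun x => f x + g x) a b (I + J).
Proof.
  intros Hf Hg HI HJ eps Heps.
  destruct (HI (eps/2) ltac:(lra)) as (c0 & d0 & h1 & h2 & h3).
  destruct (HJ (eps/2) ltac:(lra)) as (c1 & d1 & k1 & k2 & k3).
  destruct (Rmin_Rmax_window a b c0 c1 d0 d1) as (q1 & q2 & q3 & r1 & r2 & r3); try lra.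
  exists (Rmin c0 c1), (Rmax d0 d1). repeat split; try lra. intros c d hc hd.
  rewrite (RInt_plus f g) by (apply Hf || apply Hg; lra).
  specialize (h3 c d ltac:(lra) ltac:(lra)). specialize (k3 c d ltac:(lra) ltac:(lra)).
  revert h3 k3. unfold plus; simpl. unfold Rabs; repeat destruct Rcase_abs; lra.
Qed.

Lemma is_improper_RInt_scal f I k : ex_RInt_interior f a b ->
  is_improper_RInt f a b I -> is_improper_RInt (fun x => k * f x) a b (k * I).
Proof.
  intros Hf HI eps Heps.
  assert (Hk : 0 < Rabs k + 1) by (pose proof (Rabs_pos k); lra).
  destruct (HI (eps / (Rabs k + 1))) as (c0 & d0 & h1 & h2 & h3); [apply Rdiv_lt_0_compat; auto|].
  exists c0, d0. repeat split; try lra. intros c d hc hd.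
  rewrite (RInt_scal f) by (apply Hf; lra). unfold scal; simpl; unfold mult; simpl.
  replace (k * RInt f c d - k * I) with (k * (RInt f c d - I)) by ring.
  rewrite Rabs_mult. specialize (h3 c d hc hd).
  pose proof (Rabs_pos k). pose proof (Rabs_pos (RInt f c d - I)).
  assert (Ht : eps / (Rabs k + 1) * (Rabs k + 1) = eps) by (field; lra).
  nra.
Qed.

Lemma is_improper_RInt_sumR (f : nat -> R -> R) I n : a < b -> (forall k, ex_RInt_interior (f k) a b) ->
  (forall k, (k < n)%nat -> is_improper_RInt (f k) a b (I k)) ->
  is_improper_RInt (fun x => sumR (fun k => f k x) n) a b (sumR I n) /\
  ex_RInt_interior (fun x => sumR (fun k => f k x) n) a b.
Proof.
  intros Hab Hf HI. induction n as [|n IH]; simpl.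
  - split.
    + intros eps Heps. exists ((a+b)/2), ((a+b)/2). repeat split; try lra.
      intros c d _ _. rewrite RInt_const. unfold scal; simpl; unfold mult; simpl.
      rewrite Rmult_0_r, Rminus_0_r, Rabs_R0; auto.
    + intros c d _ _ _. apply ex_RInt_const.
  - destruct IH as [IH1 IH2]; [intros; apply HI; lia|]. split.
    + exact (is_improper_RInt_plus _ _ _ _ IH2 (Hf n) IH1 (HI n ltac:(lia))).
    + intros c d h1 h2 h3. apply (ex_RInt_plus (fun x => sumR (fun k => f k x) n) (f n)); auto.
      apply Hf; auto.
Qed.

Lemma improper_RInt_sub_RInt_le f h Ih c0 d0 e J :
  ex_RInt_interior f a b -> ex_RInt_interior h a b -> (forall x, a < x < b -> 0 <= f x <= h x) ->
  a < c0 -> c0 <= d0 -> d0 < b ->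
  (forall c d, a < c <= c0 -> d0 <= d < b -> Rabs (RInt h c d - Ih) < e) ->
  is_improper_RInt f a b J -> Rabs (J - RInt f c0 d0) <= 3 * e.
Proof.
  intros Hf Hh Hfh h1 h2 h3 Htail HJ.
  apply Rnot_lt_le; intro Hlt.
  assert (He : 0 < e).
  { assert (Rabs (RInt h c0 d0 - Ih) < e) by (apply Htail; lra).
    pose proof (Rabs_pos (RInt h c0 d0 - Ih)). lra. }
  destruct (HJ e He) as (c1 & d1 & k1 & k2 & k3).
  destruct (Rmin_Rmax_window a b c0 c1 d0 d1) as (q1 & q2 & q3 & r1 & r2 & r3); try lra.
  set (c := Rmin c0 c1) in *. set (d := Rmax d0 d1) in *.
  specialize (k3 c d ltac:(lra) ltac:(lra)).
  pose proof (Htail c d ltac:(lra) ltac:(lra)) as Hcd.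
  pose proof (Htail c0 d0 ltac:(lra) ltac:(lra)) as Hc0d0.
  rewrite (RInt_Chasles3 f c c0 d0 d) in k3 by (apply Hf; lra).
  rewrite (RInt_Chasles3 h c c0 d0 d) in Hcd by (apply Hh; lra).
  assert (RInt f c c0 <= RInt h c c0)
    by (apply RInt_le; try (apply Hf || apply Hh); try lra; intros; apply Hfh; lra).
  assert (RInt f d0 d <= RInt h d0 d)
    by (apply RInt_le; try (apply Hf || apply Hh); try lra; intros; apply Hfh; lra).
  assert (0 <= RInt f c c0) by (apply RInt_ge_0; try apply Hf; try lra; intros; apply Hfh; lra).
  assert (0 <= RInt f d0 d) by (apply RInt_ge_0; try apply Hf; try lra; intros; apply Hfh; lra).
  revert Hlt k3 Hcd Hc0d0. unfold Rabs; repeat destruct Rcase_abs; lra.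
Qed.

Lemma is_improper_RInt_dominated_cv (fn : nat -> R -> R) f h J I Ih N0 :
  ex_RInt_interior f a b -> ex_RInt_interior h a b -> (forall n, ex_RInt_interior (fn n) a b) ->
  (forall x, a < x < b -> 0 <= f x <= h x) ->
  (forall n x, (N0 <= n)%nat -> a < x < b -> 0 <= fn n x <= h x) ->
  is_improper_RInt h a b Ih -> (forall n, (N0 <= n)%nat -> is_improper_RInt (fn n) a b (J n)) ->
  is_improper_RInt f a b I ->
  (forall c d, a < c -> c <= d -> d < b -> Un_cv (fun n => RInt (fn n) c d) (RInt f c d)) ->
  Un_cv J I.
Proof.
  intros Hf Hh Hfn Hfh Hfnh HIh HJ HI Hcv eps Heps.
  set (e := eps / 7).
  destruct (HIh e ltac:(unfold e; lra)) as (c0 & d0 & h1 & h2 & h3).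
  destruct (Hcv c0 d0 ltac:(lra) ltac:(lra) ltac:(lra) e ltac:(unfold e; lra)) as [N1 HN1].
  exists (max N0 N1). intros n Hn.
  pose proof (improper_RInt_sub_RInt_le f h Ih c0 d0 e I Hf Hh Hfh
    ltac:(lra) ltac:(lra) ltac:(lra) h3 HI) as Htail.
  pose proof (improper_RInt_sub_RInt_le (fn n) h Ih c0 d0 e (J n) (Hfn n) Hh
    ltac:(intros; apply Hfnh; auto; lia) ltac:(lra) ltac:(lra) ltac:(lra) h3 (HJ n ltac:(lia)))
    as Htail_n.
  specialize (HN1 n ltac:(lia)). unfold R_dist in *.
  (* [3e] outside the window [c0, d0] for each integral, [e] inside it *)
  revert Htail Htail_n HN1. unfold e, Rabs; repeat destruct Rcase_abs; lra.
Qed.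

Lemma improper_int_of_is_improper_RInt f I : (forall x, a < x < b -> continuous f x) ->
  is_improper_RInt f a b I -> improper_int f a b I.
Proof.
  intros Hc HI. pose proof (ex_RInt_interior_continuous f a b Hc) as Hf. split.
  - intros c d h1 h2 h3. constructor. apply ex_RInt_Reals_0, Hf; auto.
  - intros eps Heps. destruct (HI eps Heps) as (c0 & d0 & h1 & h2 & h3).
    exists c0, d0. split; [lra|]. split; [lra|].
    intros c d pr hc hd hcd. rewrite <- RInt_Reals. apply h3; lra.
Qed.

End ImproperIntegral.

Lemma is_RInt_inv_sqrt_affine c d K1 K2 : 0 < c <= d ->
  is_RInt (fun x => K1 * / sqrt x + K2) c d (K1 * (2 * sqrt d - 2 * sqrt c) + K2 * (d - c)).
Proof.
  intros Hcd.
  set (F := fun x => K1 * (2 * sqrt x) + K2 * x).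
  replace (K1 * (2 * sqrt d - 2 * sqrt c) + K2 * (d - c)) with (minus (F d) (F c))
    by (unfold minus, plus, opp, F; simpl; ring).
  apply (is_RInt_derive (V:=R_CompleteNormedModule)); unfold F;
    intros x Hx; assert (0 < x) by (revert Hx; unfold Rmin, Rmax; destruct Rle_dec; lra).
  - auto_derive; [lra|]. field. apply Rgt_not_eq, sqrt_lt_R0; auto.
  - apply continuous_Rplus; [|apply continuous_const]. apply continuous_Rmult; [apply continuous_const|].
    apply continuous_Rinv_comp; [apply continuous_sqrt_comp, continuous_id|].
    apply Rgt_not_eq, sqrt_lt_R0; auto.
Qed.

Lemma ex_improper_RInt_inv_sqrt_bound f : ex_RInt_interior f 0 1 -> (forall x, 0 < x < 1 -> 0 <= f x) ->
  (exists K1 K2, 0 <= K1 /\ 0 <= K2 /\ forall x, 0 < x < 1 -> f x <= K1 * / sqrt x + K2) ->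
  exists I, is_improper_RInt f 0 1 I.
Proof.
  intros Hf Hp (K1 & K2 & HK1 & HK2 & Hb).
  apply (ex_improper_RInt_bounded 0 1 f (2 * K1 + K2)); auto; try lra.
  intros c d h1 h2 h3.
  pose proof (is_RInt_inv_sqrt_affine c d K1 K2 ltac:(lra)) as Hi.
  apply Rle_trans with (RInt (fun x => K1 * / sqrt x + K2) c d).
  - apply RInt_le; [lra|apply Hf; lra|eexists; exact Hi|]. intros x Hx; apply Hb; lra.
  - rewrite (is_RInt_unique _ _ _ _ Hi).
    assert (sqrt d <= 1) by (rewrite <- sqrt_1; apply sqrt_le_1_alt; lra).
    pose proof (sqrt_pos c). nra.
Qed.

Lemma RInt_exp_subst (E : R -> R) c d : (forall t, continuous E t) ->
  RInt E c d = RInt (fun x => E (- ln x) / x) (exp (- d)) (exp (- c)).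
Proof.
  intros HE. set (g := fun x => E (- ln x) / x).
  assert (Hg : forall z, 0 < z -> continuous g z).
  { intros z Hz. apply continuous_Rdiv; [|apply continuous_id|lra].
    apply (continuous_comp (fun y => - ln y) E); [|apply HE].
    apply continuous_Ropp, continuous_ln_comp; [apply continuous_id|auto]. }
  assert (Hcomp : RInt (fun y => scal (- exp (- y)) (g (exp (- y)))) c d
                  = RInt g (exp (- c)) (exp (- d))).
  { apply (RInt_comp (V:=R_CompleteNormedModule) g (fun t => exp (- t)) (fun t => - exp (- t)) c d).
    - intros x _. apply Hg, exp_pos.
    - intros x _. split; [auto_derive; auto; ring|].
      apply continuous_Ropp, continuous_exp_comp, continuous_Ropp, continuous_id. }
  rewrite (RInt_ext _ (fun y => - E y)) in Hcomp.
  2:{ intros y _. unfold g, scal; simpl; unfold mult; simpl. rewrite ln_exp, Ropp_involutive.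
      field. apply Rgt_not_eq, exp_pos. }
  assert (Hex : ex_RInt E c d)
    by (apply (ex_RInt_continuous (V:=R_CompleteNormedModule)); intros; apply HE).
  assert (Hneg : RInt (fun y => - E y) c d = - RInt E c d) by exact (RInt_opp E c d Hex).
  assert (Hex2 : ex_RInt g (exp (- d)) (exp (- c))).
  { apply (ex_RInt_continuous (V:=R_CompleteNormedModule)). intros z Hz. apply Hg.
    revert Hz; unfold Rmin, Rmax; destruct Rle_dec; pose proof (exp_pos (- c)); pose proof (exp_pos (- d)); lra. }
  rewrite Hneg, <- (opp_RInt_swap _ _ _ Hex2) in Hcomp. unfold opp in Hcomp; simpl in Hcomp.
  lra.
Qed.

Lemma improper_int_pinf_of_exp_subst (E : R -> R) I : (forall t, continuous E t) ->
  is_improper_RInt (fun x => E (- ln x) / x) 0 1 I -> improper_int_pinf E 0 I.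
Proof.
  intros HE HI. split.
  - intros c d h1 h2. constructor. apply ex_RInt_Reals_0.
    apply (ex_RInt_continuous (V:=R_CompleteNormedModule)). intros; apply HE.
  - intros eps Heps. destruct (HI eps Heps) as (c0 & d0 & h1 & h2 & h3).
    exists (- ln d0), (- ln c0). split.
    { assert (ln d0 < 0) by (rewrite <- ln_1; apply ln_increasing; lra). lra. }
    intros c d pr hc hd hcd. rewrite <- RInt_Reals, (RInt_exp_subst E c d HE).
    apply h3; split.
    + apply exp_pos.
    + rewrite <- (exp_ln c0) by lra. apply exp_le_compat. lra.
    + rewrite <- (exp_ln d0) by lra. apply exp_le_compat. lra.
    + rewrite <- exp_0. apply exp_increasing. lra.
Qed.

Section Products.

Variable a : nat -> nat.

Lemma F_N_in_01 N x : 0 <= x <= 1 -> 0 <= F_N a N x <= 1.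
Proof. intros Hx. apply prodR_in_01. intros k. apply one_sub_pow_in_01; auto. Qed.

Lemma F_N_decreasing x : 0 <= x <= 1 -> Un_decreasing (fun N => F_N a N x).
Proof.
  intros Hx N. unfold F_N; simpl. pose proof (F_N_in_01 N x Hx) as HF. unfold F_N in HF.
  pose proof (one_sub_pow_in_01 x (a N) Hx). nra.
Qed.

Lemma F_N_le_of_le x n N : 0 <= x <= 1 -> (N <= n)%nat -> F_N a n x <= F_N a N x.
Proof.
  intros Hx Hn. induction Hn as [|m _ IH]; [lra|].
  pose proof (F_N_decreasing x Hx m). simpl in *. lra.
Qed.

Lemma F_N_cv x : 0 <= x <= 1 -> Un_cv (fun N => F_N a N x) (F_inf a x).
Proof.
  intros Hx.
  assert (Hb : has_lb (fun N => F_N a N x)).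
  { exists 0. intros z [n ->]. unfold opp_seq. pose proof (F_N_in_01 n x Hx). lra. }
  destruct (decreasing_cv _ (F_N_decreasing x Hx) Hb) as [l Hl].
  unfold F_inf. rewrite (Lim_eq _ l); auto.
Qed.

Lemma F_inf_le_F_N x N : 0 <= x <= 1 -> F_inf a x <= F_N a N x.
Proof. intros Hx. apply decreasing_ineq; [apply F_N_decreasing|apply F_N_cv]; auto. Qed.

Lemma F_inf_nonneg x : 0 <= x <= 1 -> 0 <= F_inf a x.
Proof.
  intros Hx. eapply Rle_cv_lim; [|apply Un_cv_const|apply F_N_cv; auto].
  intros n; simpl. apply F_N_in_01; auto.
Qed.

Lemma F_N_le_prod_pow N x : 0 <= x <= 1 -> F_N a N x <= prodR (fun k => INR (a k)) N * (1 - x) ^ N.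
Proof.
  intros Hx. induction N as [|N IH]; [unfold F_N; simpl; lra|].
  unfold F_N in *; simpl. pose proof (F_N_in_01 N x Hx) as HF. unfold F_N in HF.
  pose proof (one_sub_pow_le x (a N) Hx). pose proof (one_sub_pow_in_01 x (a N) Hx).
  replace (prodR (fun k => INR (a k)) N * INR (a N) * ((1 - x) * (1 - x) ^ N)) with
    ((prodR (fun k => INR (a k)) N * (1 - x) ^ N) * (INR (a N) * (1 - x))) by ring.
  apply Rmult_le_compat; lra.
Qed.

Lemma continuous_F_N N x : continuous (F_N a N) x.
Proof.
  unfold F_N. apply (continuous_prodR (fun k y => 1 - y ^ a k)). intros.
  apply continuous_Rminus; [apply continuous_const|apply continuous_Rpow, continuous_id].
Qed.

End Products.

(** * The series L *)

Definition L_cv_on_01 a j := forall x, 0 <= x < 1 -> Un_cv (L_partial a j x) (Lser a j x).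

Definition LF_integrand a j N x := Lser a j x * F_N a N x * Rabs (ln x) ^ (j - 1) / x.

Definition F_N_omit a N k x := prodR (fun i => if Nat.eqb i k then 1 else 1 - x ^ a i) N.

Definition EU_integrand_01 a j N k x := EU_integrand a j N k (- ln x) / x.

Definition EU_sum_integrand_01 a j N x :=
  / INR (fact (j - 1)) * (L_partial a j x N * F_N a N x * Rabs (ln x) ^ (j - 1) / x).

Section Series.

Variables (a : nat -> nat) (j : nat).
Hypothesis Ha : forall k, (0 < a k)%nat.

Lemma pow_a_in_01 k x : 0 <= x < 1 -> 0 <= x ^ a k < 1.
Proof. intros Hx; apply pow_lt_1_compat; auto. Qed.

Lemma L_term_ge_pow k x : 0 <= x < 1 -> 0 <= x ^ a k <= L_term a j x k.
Proof.
  intros Hx. pose proof (pow_a_in_01 k x Hx).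
  assert (1 <= INR (a k) ^ j) by (apply pow_R1_Rle, (le_INR 1), Ha).
  assert (1 <= / (1 - x ^ a k)) by (rewrite <- Rinv_1 at 1; apply Rinv_le_contravar; lra).
  unfold L_term, Rdiv. split; [lra|].
  replace (INR (a k) ^ j * x ^ a k * / (1 - x ^ a k)) with (x ^ a k * (INR (a k) ^ j * / (1 - x ^ a k))) by ring.
  rewrite <- (Rmult_1_r (x ^ a k)) at 1. apply Rmult_le_compat_l; nra.
Qed.

Lemma L_term_le k x y : 0 <= x <= y -> y < 1 -> L_term a j x k <= L_term a j y k.
Proof.
  intros Hx Hy. unfold L_term.
  pose proof (pow_a_in_01 k x ltac:(lra)). pose proof (pow_a_in_01 k y ltac:(lra)).
  pose proof (pow_le (INR (a k)) j (pos_INR _)).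
  assert (x ^ a k <= y ^ a k) by (apply pow_incr; lra).
  unfold Rdiv. rewrite !Rmult_assoc. apply Rmult_le_compat_l; auto.
  apply Rmult_le_compat; try lra; [left; apply Rinv_0_lt_compat; lra|apply Rinv_le_contravar; lra].
Qed.

(* [x^n <= (x/y) y^n] for [n >= 1] *)
Lemma L_term_le_scale k x y : 0 < x <= y -> y < 1 -> L_term a j x k <= x / y * L_term a j y k.
Proof.
  intros Hx Hy. unfold L_term.
  pose proof (pow_a_in_01 k x ltac:(lra)). pose proof (pow_a_in_01 k y ltac:(lra)).
  pose proof (pow_le (INR (a k)) j (pos_INR _)).
  assert (Hxy : x ^ a k <= x / y * y ^ a k).
  { pose proof (Ha k). destruct (a k) as [|n]; [lia|]. simpl.
    replace (x / y * (y * y ^ n)) with (x * y ^ n) by (field; lra).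
    apply Rmult_le_compat_l; [lra|]. apply pow_incr; lra. }
  assert (x ^ a k <= y ^ a k) by (apply pow_incr; lra).
  apply Rle_trans with (INR (a k) ^ j * (x / y * y ^ a k) / (1 - x ^ a k)).
  - unfold Rdiv. apply Rmult_le_compat_r; [left; apply Rinv_0_lt_compat; lra|].
    apply Rmult_le_compat_l; auto.
  - replace (x / y * (INR (a k) ^ j * y ^ a k / (1 - y ^ a k))) with
      (INR (a k) ^ j * (x / y * y ^ a k) / (1 - y ^ a k)) by (field; lra).
    unfold Rdiv. apply Rmult_le_compat_l; [|apply Rinv_le_contravar; lra].
    apply Rmult_le_pos; auto. apply Rmult_le_pos; [apply Rlt_le, Rdiv_lt_0_compat|]; lra.
Qed.

Lemma L_partial_growing x : 0 <= x < 1 -> Un_growing (L_partial a j x).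
Proof. intros Hx n. unfold L_partial; simpl. pose proof (L_term_ge_pow n x Hx). lra. Qed.

Lemma L_partial_nonneg x n : 0 <= x < 1 -> 0 <= L_partial a j x n.
Proof. intros Hx. apply sumR_nonneg. intros k _. pose proof (L_term_ge_pow k x Hx). lra. Qed.

Lemma L_partial_le x y n : 0 <= x <= y -> y < 1 -> L_partial a j x n <= L_partial a j y n.
Proof. intros Hx Hy. apply sumR_le. intros k _. apply L_term_le; auto. Qed.

(* convergence at one point forces convergence at every smaller point, by monotonicity *)
Lemma L_cv_on_01_of_cv_near_1 delta : 0 < delta ->
  (forall x, 1 - delta < x < 1 -> exists l, Un_cv (L_partial a j x) l) -> L_cv_on_01 a j.
Proof.
  intros Hd HL x Hx.
  set (y := Rmax x (1 - Rmin delta 1 / 2)).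
  assert (Hy : x <= y /\ 1 - delta < y < 1) by (unfold y, Rmax, Rmin; repeat destruct Rle_dec; lra).
  destruct (HL y ltac:(lra)) as [ly Hly].
  assert (Hb : has_ub (L_partial a j x)).
  { exists ly. intros z [n ->]. apply Rle_trans with (L_partial a j y n).
    - apply L_partial_le; lra.
    - apply growing_ineq; auto. apply L_partial_growing; lra. }
  destruct (growing_cv _ (L_partial_growing x Hx) Hb) as [l Hl].
  unfold Lser. rewrite (Lim_eq _ l); auto.
Qed.

Lemma L_cv_on_01_of_O_bound C rho delta : 0 < delta ->
  (forall x, 1 - delta < x < 1 ->
     exists l, Un_cv (L_partial a j x) l /\ Rabs l <= C * Rpower (1 - x) (- rho)) ->
  L_cv_on_01 a j /\ forall x, 0 < x -> 1 - delta < x < 1 -> Lser a j x <= C * Rpower (1 - x) (- rho).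
Proof.
  intros Hd HO.
  assert (HL : L_cv_on_01 a j).
  { apply (L_cv_on_01_of_cv_near_1 delta Hd). intros x Hx. destruct (HO x Hx) as [l [Hl _]]. eauto. }
  split; [exact HL|]. intros x Hx0 Hx. destruct (HO x Hx) as [l [Hl Hb]].
  rewrite (UL_sequence _ _ _ (HL x ltac:(lra)) Hl). eapply Rle_trans; [apply Rle_abs|exact Hb].
Qed.

Lemma continuous_L_partial N x : 0 <= x < 1 -> continuous (fun y => L_partial a j y N) x.
Proof.
  intros Hx. unfold L_partial. apply (continuous_sumR (fun k y => L_term a j y k)).
  intros k _. unfold L_term. apply continuous_Rdiv.
  - apply continuous_Rmult; [apply continuous_const|apply continuous_Rpow, continuous_id].
  - apply continuous_Rminus; [apply continuous_const|apply continuous_Rpow, continuous_id].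
  - pose proof (pow_a_in_01 k x Hx). lra.
Qed.

(* [F_N - F_{N+1} = x^{a_N} F_N <= x^{a_N} <= L_term a j x N] *)
Lemma F_N_sub_F_N_le N m x : 0 <= x < 1 ->
  F_N a N x - F_N a (m + N) x <= L_partial a j x (m + N) - L_partial a j x N.
Proof.
  intros Hx. induction m as [|m IH]; simpl; [lra|].
  unfold F_N, L_partial in *; simpl.
  pose proof (F_N_in_01 a (m + N) x ltac:(lra)) as HF. unfold F_N in HF.
  pose proof (L_term_ge_pow (m + N) x Hx).
  pose proof (pow_a_in_01 (m + N) x Hx). nra.
Qed.

Section Convergent.

Hypothesis HL : L_cv_on_01 a j.

Lemma L_partial_le_Lser x n : 0 <= x < 1 -> L_partial a j x n <= Lser a j x.
Proof. intros Hx. apply growing_ineq; auto. apply L_partial_growing; auto. Qed.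

Lemma Lser_nonneg x : 0 <= x < 1 -> 0 <= Lser a j x.
Proof. intros Hx. apply Rle_trans with (L_partial a j x 0); [unfold L_partial; simpl; lra|]. apply L_partial_le_Lser; auto. Qed.

Lemma Lser_tail_le x y N : 0 <= x <= y -> y < 1 ->
  Lser a j x - L_partial a j x N <= Lser a j y - L_partial a j y N.
Proof.
  intros Hx Hy.
  assert (Hg : Un_growing (fun n => L_partial a j y n - L_partial a j x n)).
  { intros n. unfold L_partial; simpl. pose proof (L_term_le n x y Hx Hy). lra. }
  pose proof (growing_ineq _ _ Hg (CV_minus _ _ _ _ (HL y ltac:(lra)) (HL x ltac:(lra))) N).
  simpl in *. lra.
Qed.

Lemma Lser_le x y : 0 <= x <= y -> y < 1 -> Lser a j x <= Lser a j y.
Proof. intros Hx Hy. pose proof (Lser_tail_le x y 0 Hx Hy). unfold L_partial in *; simpl in *. lra. Qed.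

Lemma Lser_le_scale x y : 0 < x <= y -> y < 1 -> Lser a j x <= x / y * Lser a j y.
Proof.
  intros Hx Hy.
  eapply Rle_cv_lim; [|apply (HL x ltac:(lra))|apply (CV_mult _ _ _ _ (Un_cv_const (x/y)) (HL y ltac:(lra)))].
  intros n. unfold L_partial. rewrite <- sumR_scal_l. apply sumR_le. intros k _.
  apply L_term_le_scale; auto.
Qed.

Lemma Lser_tail_small d eps : 0 <= d < 1 -> 0 < eps -> exists N, Lser a j d - L_partial a j d N < eps.
Proof.
  intros Hd He. destruct (HL d Hd eps He) as [N HN]. exists N.
  specialize (HN N (le_n _)). unfold R_dist in HN. revert HN; unfold Rabs; destruct Rcase_abs; lra.
Qed.

Lemma F_N_sub_F_inf_le N x : 0 <= x < 1 -> F_N a N x - F_inf a x <= Lser a j x - L_partial a j x N.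
Proof.
  intros Hx. eapply Rle_cv_lim.
  - intros m. apply (F_N_sub_F_N_le N m x Hx).
  - apply (CV_minus _ _ _ _ (Un_cv_const _) (CV_shift' _ N _ (F_N_cv a x ltac:(lra)))).
  - apply (CV_minus _ _ _ _ (CV_shift' _ N _ (HL x Hx)) (Un_cv_const _)).
Qed.

(* both L and F are locally uniform limits on [0,1), the tail of L at a larger point
   controlling both errors *)
Lemma continuous_Lser x : 0 < x < 1 -> continuous (Lser a j) x.
Proof.
  intros Hx. set (d := (1 + x) / 2).
  apply (continuous_uniform_limit (fun n y => L_partial a j y n) _ x (Rmin x (1 - x) / 2)).
  - unfold Rmin; destruct Rle_dec; lra.
  - intros n; apply continuous_L_partial; lra.
  - intros eps He. destruct (Lser_tail_small d eps ltac:(unfold d; lra) He) as [N HN].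
    exists N. intros y Hy.
    assert (Hy' : 0 <= y <= d) by (revert Hy; unfold d, Rmin, Rabs; destruct Rle_dec, Rcase_abs; lra).
    pose proof (Lser_tail_le y d N Hy' ltac:(unfold d; lra)).
    pose proof (L_partial_le_Lser y N ltac:(unfold d in *; lra)).
    rewrite Rabs_minus_sym, Rabs_right; lra.
Qed.

Lemma continuous_F_inf x : 0 < x < 1 -> continuous (F_inf a) x.
Proof.
  intros Hx. set (d := (1 + x) / 2).
  apply (continuous_uniform_limit (fun n y => F_N a n y) _ x (Rmin x (1 - x) / 2)).
  - unfold Rmin; destruct Rle_dec; lra.
  - intros n; apply continuous_F_N.
  - intros eps He. destruct (Lser_tail_small d eps ltac:(unfold d; lra) He) as [N HN].
    exists N. intros y Hy.
    assert (Hy' : 0 <= y <= d) by (revert Hy; unfold d, Rmin, Rabs; destruct Rle_dec, Rcase_abs; lra).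
    pose proof (Lser_tail_le y d N Hy' ltac:(unfold d; lra)).
    pose proof (F_N_sub_F_inf_le N y ltac:(unfold d in *; lra)).
    pose proof (F_inf_le_F_N a y N ltac:(unfold d in *; lra)).
    rewrite Rabs_right; lra.
Qed.

(* [sum_k x^{a_k} <= L(x)] is finite for [x < 1] and [sum_k 1^{a_k}] diverges *)
Lemma x_alpha_eq_1 : x_alpha a = 1.
Proof.
  assert (Hset : forall y, xalpha_set a y <-> y = 1).
  { intros y; split.
    - intros [[Hy0 [Hy1|Hy1]] Hdiv]; auto. exfalso. apply Hdiv.
      exists (Lser a j y). intros n. apply Rle_trans with (L_partial a j y n).
      + apply sumR_le. intros k _. apply L_term_ge_pow; lra.
      + apply L_partial_le_Lser; lra.
    - intros ->. split; [lra|]. intros [M HM].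
      assert (Hs : forall n, sumR (fun k => 1 ^ a k) n = INR n).
      { induction n as [|n IH]; cbn [sumR]; [reflexivity|]. rewrite IH, pow1, S_INR; ring. }
      destruct (INR_unbounded M) as [n Hn]. specialize (HM n). rewrite Hs in HM. lra. }
  assert (Hinf : is_inf (xalpha_set a) 1).
  { split; [intros y Hy; apply Hset in Hy; lra|intros z Hz; apply Hz, Hset; auto]. }
  unfold x_alpha. destruct (choiceR_spec _ (ex_intro _ 1 Hinf)) as [Hlb Hglb].
  apply Rle_antisym; [apply Hlb, Hset; auto|]. apply Hglb. intros y Hy. apply (proj1 Hinf); auto.
Qed.

(** * The dominating integrand *)

Lemma LF_integrand_nonneg N x : 0 < x < 1 -> 0 <= LF_integrand a j N x.
Proof.
  intros Hx. unfold LF_integrand, Rdiv.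
  pose proof (Lser_nonneg x ltac:(lra)). pose proof (F_N_in_01 a N x ltac:(lra)).
  pose proof (pow_le (Rabs (ln x)) (j - 1) (Rabs_pos _)).
  apply Rmult_le_pos; [|left; apply Rinv_0_lt_compat; lra].
  apply Rmult_le_pos; [apply Rmult_le_pos|]; lra.
Qed.

Lemma LF_integrand_le_away_from_1 N x p : 0 < x <= p -> p < 1 ->
  LF_integrand a j N x <= Lser a j p / p * (2 ^ (j - 1) * INR (fact (j - 1))) * / sqrt x.
Proof.
  intros Hx Hp. unfold LF_integrand.
  pose proof (Lser_nonneg x ltac:(lra)). pose proof (Lser_nonneg p ltac:(lra)).
  pose proof (F_N_in_01 a N x ltac:(lra)).
  pose proof (Lser_le_scale x p ltac:(lra) Hp).
  pose proof (pow_abs_ln_le (j - 1) x ltac:(lra)).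
  pose proof (pow_le (Rabs (ln x)) (j - 1) (Rabs_pos _)).
  assert (HLp : 0 <= Lser a j p / p) by (apply Rle_mult_inv_pos; lra).
  apply Rle_trans with (Lser a j p / p * Rabs (ln x) ^ (j - 1)).
  - replace (Lser a j x * F_N a N x * Rabs (ln x) ^ (j - 1) / x)
      with (Lser a j x * F_N a N x / x * Rabs (ln x) ^ (j - 1)) by (field; lra).
    apply Rmult_le_compat_r; [lra|].
    replace (Lser a j p / p) with ((x / p * Lser a j p) / x) by (field; lra).
    unfold Rdiv. apply Rmult_le_compat_r; [left; apply Rinv_0_lt_compat; lra|]. nra.
  - replace (Lser a j p / p * (2 ^ (j - 1) * INR (fact (j - 1))) * / sqrt x)
      with (Lser a j p / p * (2 ^ (j - 1) * INR (fact (j - 1)) / sqrt x)) by (unfold Rdiv; ring).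
    apply Rmult_le_compat_l; lra.
Qed.

(* near 1 the growth [(1-x)^{-rho}] of L is cancelled by the zero [(1-x)^N] of F_N *)
Lemma LF_integrand_le_near_1 N x p C rho : 0 < p <= x -> x < 1 ->
  Lser a j x <= C * Rpower (1 - x) (- rho) -> rho <= INR N ->
  LF_integrand a j N x <= Rabs C * prodR (fun k => INR (a k)) N * (Rabs (ln p) ^ (j - 1) / p).
Proof.
  intros Hpx Hx HB HN. unfold LF_integrand.
  set (A := prodR (fun k => INR (a k)) N).
  assert (HA : 0 <= A) by (apply prodR_nonneg; intros; apply pos_INR).
  pose proof (Lser_nonneg x ltac:(lra)).
  pose proof (F_N_in_01 a N x ltac:(lra)).
  pose proof (F_N_le_prod_pow a N x ltac:(lra)) as HFu. fold A in HFu.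
  pose proof (Rpower_opp_mul_pow_le_1 (1 - x) rho N ltac:(lra) HN) as Hr.
  assert (Hr0 : 0 < Rpower (1 - x) (- rho)) by (unfold Rpower; apply exp_pos).
  assert (0 <= (1 - x) ^ N) by (apply pow_le; lra).
  pose proof (Rle_abs C). pose proof (Rabs_pos C).
  assert (HLF : Lser a j x * F_N a N x <= Rabs C * A).
  { apply Rle_trans with ((Rabs C * Rpower (1 - x) (- rho)) * (A * (1 - x) ^ N)).
    - apply Rmult_le_compat; nra.
    - replace (Rabs C * Rpower (1 - x) (- rho) * (A * (1 - x) ^ N))
        with ((Rabs C * A) * (Rpower (1 - x) (- rho) * (1 - x) ^ N)) by ring.
      rewrite <- (Rmult_1_r (Rabs C * A)) at 2.
      apply Rmult_le_compat_l; [apply Rmult_le_pos|]; lra. }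
  pose proof (pow_abs_ln_div_le (j - 1) p x Hpx ltac:(lra)).
  assert (0 <= Rabs (ln x) ^ (j - 1) / x)
    by (apply Rle_mult_inv_pos; [apply pow_le, Rabs_pos|lra]).
  replace (Lser a j x * F_N a N x * Rabs (ln x) ^ (j - 1) / x)
    with ((Lser a j x * F_N a N x) * (Rabs (ln x) ^ (j - 1) / x)) by (unfold Rdiv; ring).
  apply Rmult_le_compat; try lra. apply Rmult_le_pos; lra.
Qed.

Lemma LF_integrand_le_inv_sqrt N C rho delta : 0 < delta ->
  (forall x, 0 < x -> 1 - delta < x < 1 -> Lser a j x <= C * Rpower (1 - x) (- rho)) ->
  rho <= INR N ->
  exists K1 K2, 0 <= K1 /\ 0 <= K2 /\ forall x, 0 < x < 1 -> LF_integrand a j N x <= K1 * / sqrt x + K2.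
Proof.
  intros Hd HB HN.
  set (p := 1 - Rmin delta 1 / 2).
  assert (Hp : 1/2 <= p < 1 /\ 1 - delta < p) by (unfold p, Rmin; destruct Rle_dec; lra).
  set (K1 := Lser a j p / p * (2 ^ (j - 1) * INR (fact (j - 1)))).
  set (K2 := Rabs C * prodR (fun k => INR (a k)) N * (Rabs (ln p) ^ (j - 1) / p)).
  assert (HK1 : 0 <= K1).
  { apply Rmult_le_pos; [apply Rle_mult_inv_pos; [apply Lser_nonneg|]; lra|].
    apply Rmult_le_pos; [apply pow_le; lra|apply pos_INR]. }
  assert (HK2 : 0 <= K2).
  { apply Rmult_le_pos; [apply Rmult_le_pos; [apply Rabs_pos|apply prodR_nonneg; intros; apply pos_INR]|].
    apply Rle_mult_inv_pos; [apply pow_le, Rabs_pos|lra]. }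
  exists K1, K2. split; [lra|]. split; [lra|]. intros x Hx.
  assert (0 <= K1 * / sqrt x) by (apply Rmult_le_pos; [lra|left; apply Rinv_0_lt_compat, sqrt_lt_R0; lra]).
  destruct (Rle_or_lt x p).
  - apply Rle_trans with (K1 * / sqrt x); [apply LF_integrand_le_away_from_1|]; lra.
  - apply Rle_trans with K2; [|lra].
    apply (LF_integrand_le_near_1 N x p C rho); try lra. apply HB; lra.
Qed.

Lemma continuous_LF_integrand N x : 0 < x < 1 -> continuous (LF_integrand a j N) x.
Proof.
  intros Hx. unfold LF_integrand.
  apply continuous_Rdiv; [|apply continuous_id|lra].
  apply continuous_Rmult; [apply continuous_Rmult|].
  - apply continuous_Lser; auto.
  - apply continuous_F_N.
  - apply continuous_Rpow, continuous_Rabs_comp, continuous_ln_comp; [apply continuous_id|lra].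
Qed.

Lemma ex_improper_RInt_LF_integrand N C rho delta : 0 < delta ->
  (forall x, 0 < x -> 1 - delta < x < 1 -> Lser a j x <= C * Rpower (1 - x) (- rho)) ->
  rho <= INR N -> exists J, is_improper_RInt (LF_integrand a j N) 0 1 J.
Proof.
  intros Hd HB HN. apply ex_improper_RInt_inv_sqrt_bound.
  - apply ex_RInt_interior_continuous. intros; apply continuous_LF_integrand; auto.
  - intros; apply LF_integrand_nonneg; auto.
  - apply (LF_integrand_le_inv_sqrt N C rho delta); auto.
Qed.

(** * Convergence of the integrals *)

Lemma I_integrand_le N x : 0 < x < 1 ->
  0 <= I_integrand a j x <= / INR (fact (j - 1)) * LF_integrand a j N x.
Proof.
  intros Hx. unfold I_integrand, LF_integrand.
  pose proof (Rinv_0_lt_compat _ (lt_0_INR _ (lt_O_fact (j - 1)))).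
  assert (0 <= Rabs (ln x) ^ (j - 1) / x)
    by (apply Rle_mult_inv_pos; [apply pow_le, Rabs_pos|lra]).
  pose proof (Lser_nonneg x ltac:(lra)).
  pose proof (F_inf_nonneg a x ltac:(lra)). pose proof (F_inf_le_F_N a x N ltac:(lra)).
  unfold Rdiv. rewrite !Rmult_assoc. fold (Rabs (ln x) ^ (j - 1) / x).
  split; [apply Rmult_le_pos; [lra|]; apply Rmult_le_pos; [|apply Rmult_le_pos]; lra|].
  apply Rmult_le_compat_l; [lra|]. apply Rmult_le_compat_l; [lra|].
  apply Rmult_le_compat_r; lra.
Qed.

Lemma EU_sum_integrand_01_le n N x : 0 < x < 1 -> (N <= n)%nat ->
  0 <= EU_sum_integrand_01 a j n x <= / INR (fact (j - 1)) * LF_integrand a j N x.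
Proof.
  intros Hx Hn. unfold EU_sum_integrand_01, LF_integrand.
  pose proof (Rinv_0_lt_compat _ (lt_0_INR _ (lt_O_fact (j - 1)))).
  assert (0 <= Rabs (ln x) ^ (j - 1) / x)
    by (apply Rle_mult_inv_pos; [apply pow_le, Rabs_pos|lra]).
  pose proof (L_partial_nonneg x n ltac:(lra)). pose proof (L_partial_le_Lser x n ltac:(lra)).
  pose proof (F_N_in_01 a n x ltac:(lra)). pose proof (F_N_le_of_le a x n N ltac:(lra) Hn).
  unfold Rdiv. rewrite !Rmult_assoc. fold (Rabs (ln x) ^ (j - 1) / x).
  split; [apply Rmult_le_pos; [lra|]; apply Rmult_le_pos; [|apply Rmult_le_pos]; lra|].
  apply Rmult_le_compat_l; [lra|].
  apply Rmult_le_compat; [lra|apply Rmult_le_pos; lra|lra|apply Rmult_le_compat_r; lra].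
Qed.

Lemma L_partial_F_N_sub_le N x d : 0 <= x <= d -> d < 1 ->
  Rabs (L_partial a j x N * F_N a N x - Lser a j x * F_inf a x)
  <= (1 + Lser a j d) * (Lser a j d - L_partial a j d N).
Proof.
  intros Hx Hd.
  pose proof (L_partial_nonneg x N ltac:(lra)). pose proof (L_partial_le_Lser x N ltac:(lra)).
  pose proof (F_N_in_01 a N x ltac:(lra)). pose proof (F_inf_nonneg a x ltac:(lra)).
  pose proof (F_inf_le_F_N a x N ltac:(lra)). pose proof (F_N_sub_F_inf_le N x ltac:(lra)).
  pose proof (Lser_tail_le x d N Hx Hd). pose proof (Lser_le x d Hx Hd).
  pose proof (Lser_nonneg x ltac:(lra)).
  set (T := Lser a j d - L_partial a j d N) in *.
  replace (L_partial a j x N * F_N a N x - Lser a j x * F_inf a x) with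
    (- ((Lser a j x - L_partial a j x N) * F_N a N x) + Lser a j x * (F_N a N x - F_inf a x)) by ring.
  eapply Rle_trans; [apply Rabs_triang|]. rewrite Rabs_Ropp.
  rewrite (Rabs_right ((Lser a j x - L_partial a j x N) * F_N a N x)) by nra.
  rewrite (Rabs_right (Lser a j x * (F_N a N x - F_inf a x))) by nra.
  assert ((Lser a j x - L_partial a j x N) * F_N a N x <= T) by nra.
  assert (Lser a j x * (F_N a N x - F_inf a x) <= Lser a j d * T) by nra.
  lra.
Qed.

Lemma EU_sum_integrand_01_sub_le n c d x : 0 < c <= x -> x <= d -> d < 1 ->
  Rabs (EU_sum_integrand_01 a j n x - I_integrand a j x)
  <= / INR (fact (j - 1)) * (Rabs (ln c) ^ (j - 1) / c)
     * ((1 + Lser a j d) * (Lser a j d - L_partial a j d n)).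
Proof.
  intros Hc Hx Hd. unfold EU_sum_integrand_01, I_integrand.
  pose proof (Rinv_0_lt_compat _ (lt_0_INR _ (lt_O_fact (j - 1)))).
  set (W := Rabs (ln x) ^ (j - 1) / x).
  assert (HW : 0 <= W <= Rabs (ln c) ^ (j - 1) / c).
  { split; [apply Rle_mult_inv_pos; [apply pow_le, Rabs_pos|lra]|].
    apply pow_abs_ln_div_le; lra. }
  replace (/ INR (fact (j - 1)) * (L_partial a j x n * F_N a n x * Rabs (ln x) ^ (j - 1) / x) -
           / INR (fact (j - 1)) * (Lser a j x * F_inf a x * Rabs (ln x) ^ (j - 1) / x))
    with (/ INR (fact (j - 1)) * W * (L_partial a j x n * F_N a n x - Lser a j x * F_inf a x))
    by (unfold W, Rdiv; ring).
  rewrite Rabs_mult, Rabs_mult, (Rabs_right (/ _)), (Rabs_right W) by lra.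
  apply Rmult_le_compat; try lra; [apply Rmult_le_pos; lra|apply Rabs_pos| |].
  - apply Rmult_le_compat_l; lra.
  - apply L_partial_F_N_sub_le; lra.
Qed.

Lemma continuous_I_integrand x : 0 < x < 1 -> continuous (I_integrand a j) x.
Proof.
  intros Hx. unfold I_integrand. apply continuous_Rmult; [apply continuous_const|].
  apply continuous_Rdiv; [|apply continuous_id|lra]. apply continuous_Rmult; [apply continuous_Rmult|].
  - apply continuous_Lser; auto.
  - apply continuous_F_inf; auto.
  - apply continuous_Rpow, continuous_Rabs_comp, continuous_ln_comp; [apply continuous_id|lra].
Qed.

Lemma continuous_EU_sum_integrand_01 N x : 0 < x < 1 -> continuous (EU_sum_integrand_01 a j N) x.
Proof.
  intros Hx. unfold EU_sum_integrand_01. apply continuous_Rmult; [apply continuous_const|].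
  apply continuous_Rdiv; [|apply continuous_id|lra]. apply continuous_Rmult; [apply continuous_Rmult|].
  - apply continuous_L_partial; lra.
  - apply continuous_F_N.
  - apply continuous_Rpow, continuous_Rabs_comp, continuous_ln_comp; [apply continuous_id|lra].
Qed.

(* on [c, d] the pointwise error is bounded by a constant times the tail of L at d *)
Lemma RInt_EU_sum_integrand_01_cv c d : 0 < c -> c <= d -> d < 1 ->
  Un_cv (fun n => RInt (EU_sum_integrand_01 a j n) c d) (RInt (I_integrand a j) c d).
Proof.
  intros Hc Hcd Hd eps Heps.
  set (K := (d - c) * (/ INR (fact (j - 1)) * (Rabs (ln c) ^ (j - 1) / c) * (1 + Lser a j d))).
  assert (HK : 0 <= K).
  { pose proof (Rinv_0_lt_compat _ (lt_0_INR _ (lt_O_fact (j - 1)))). pose proof (Lser_nonneg d ltac:(lra)).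
    assert (0 <= Rabs (ln c) ^ (j - 1) / c) by (apply Rle_mult_inv_pos; [apply pow_le, Rabs_pos|lra]).
    unfold K. apply Rmult_le_pos; [lra|]. apply Rmult_le_pos; [apply Rmult_le_pos|]; lra. }
  destruct (Lser_tail_small d (eps / (K + 1)) ltac:(lra) ltac:(apply Rdiv_lt_0_compat; lra)) as [N HN].
  exists N. intros n Hn. unfold R_dist.
  assert (Hexf : ex_RInt (EU_sum_integrand_01 a j n) c d)
    by (apply (ex_RInt_interior_continuous _ 0 1); [intros; apply continuous_EU_sum_integrand_01|..]; lra).
  assert (Hexg : ex_RInt (I_integrand a j) c d)
    by (apply (ex_RInt_interior_continuous _ 0 1); [intros; apply continuous_I_integrand|..]; lra).
  assert (Htail : Lser a j d - L_partial a j d n <= Lser a j d - L_partial a j d N).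
  { assert (L_partial a j d N <= L_partial a j d n); [|lra].
    apply sumR_le_index; auto. intros k. pose proof (L_term_ge_pow k d ltac:(lra)); lra. }
  set (g := fun x => EU_sum_integrand_01 a j n x - I_integrand a j x).
  replace (RInt (EU_sum_integrand_01 a j n) c d - RInt (I_integrand a j) c d) with (RInt g c d)
    by exact (RInt_minus (V:=R_CompleteNormedModule) _ _ c d Hexf Hexg).
  eapply Rle_lt_trans.
  - apply abs_RInt_le_const; [lra|exact (ex_RInt_minus (V:=R_NormedModule) _ _ c d Hexf Hexg)|].
    intros t Ht. apply (EU_sum_integrand_01_sub_le n c d t); lra.
  - replace ((d - c) * (/ INR (fact (j - 1)) * (Rabs (ln c) ^ (j - 1) / c)
               * ((1 + Lser a j d) * (Lser a j d - L_partial a j d n))))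
      with (K * (Lser a j d - L_partial a j d n)) by (unfold K; ring).
    assert (Ht : eps / (K + 1) * (K + 1) = eps) by (field; lra).
    assert (0 < eps / (K + 1)) by (apply Rdiv_lt_0_compat; lra).
    pose proof (L_partial_le_Lser d n ltac:(lra)).
    nra.
Qed.

(** * The integrands of E[U_j^N] after the substitution x = e^{-t} *)

Section Transported.

Hypothesis Hj : (1 <= j)%nat.

Lemma EU_integrand_01_eq N k x : 0 < x < 1 ->
  EU_integrand_01 a j N k x
  = / INR (fact (j - 1)) * (INR (a k) ^ j * x ^ a k * Rabs (ln x) ^ (j - 1) / x * F_N_omit a N k x).
Proof.
  intros Hx. unfold EU_integrand_01, EU_integrand, F_N_omit.
  rewrite exp_INR_mul_ln by lra.
  rewrite (prodR_ext _ (fun i => if Nat.eqb i k then 1 else 1 - x ^ a i)).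
  2:{ intros i _. destruct (Nat.eqb i k); auto. rewrite exp_INR_mul_ln by lra. auto. }
  rewrite Rpow_mult_distr, (Rabs_left1 (ln x)) by (apply ln_nonpos; lra).
  replace (INR (a k) ^ j) with (INR (a k) * INR (a k) ^ (j - 1))
    by (rewrite tech_pow_Rmult; f_equal; lia).
  field. split; [lra|]. apply Rgt_not_eq, lt_0_INR, lt_O_fact.
Qed.

Lemma sumR_EU_integrand_01 N x : 0 < x < 1 ->
  sumR (fun k => EU_integrand_01 a j N k x) N = EU_sum_integrand_01 a j N x.
Proof.
  intros Hx. unfold EU_sum_integrand_01, L_partial.
  rewrite (sumR_ext _
    (fun k => L_term a j x k * (/ INR (fact (j - 1)) * (F_N a N x * Rabs (ln x) ^ (j - 1) / x)))).
  - rewrite sumR_scal_r. unfold Rdiv. ring.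
  - intros k Hk. rewrite EU_integrand_01_eq by auto. unfold L_term, F_N.
    rewrite <- (prodR_omit (fun i => 1 - x ^ a i) k N Hk). fold (F_N_omit a N k x).
    pose proof (pow_a_in_01 k x ltac:(lra)).
    field; repeat split; try lra; apply Rgt_not_eq, lt_0_INR, lt_O_fact.
Qed.

Lemma continuous_EU_integrand N k t : continuous (EU_integrand a j N k) t.
Proof.
  assert (Hexp : forall i, continuous (fun t => exp (- (INR (a i) * t))) t)
    by (intros; apply continuous_exp_comp, continuous_Ropp, continuous_Rmult;
        [apply continuous_const|apply continuous_id]).
  unfold EU_integrand.
  apply continuous_Rmult; [apply continuous_Rmult; [apply continuous_Rmult|]|].
  - apply continuous_const.
  - apply Hexp.
  - apply continuous_Rdiv; [|apply continuous_const|].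
    + apply continuous_Rpow, continuous_Rmult; [apply continuous_const|apply continuous_id].
    + apply Rgt_not_eq, lt_0_INR, lt_O_fact.
  - apply (continuous_prodR (fun i t => if Nat.eqb i k then 1 else 1 - exp (- (INR (a i) * t)))).
    intros i _. destruct (Nat.eqb i k); [apply continuous_const|].
    apply continuous_Rminus; [apply continuous_const|apply Hexp].
Qed.

Lemma continuous_EU_integrand_01 N k x : 0 < x -> continuous (EU_integrand_01 a j N k) x.
Proof.
  intros Hx. unfold EU_integrand_01. apply continuous_Rdiv; [|apply continuous_id|lra].
  apply (continuous_comp (fun y => - ln y) (EU_integrand a j N k)).
  - apply continuous_Ropp, continuous_ln_comp; [apply continuous_id|auto].
  - apply continuous_EU_integrand.
Qed.

Lemma F_N_omit_in_01 N k x : 0 <= x <= 1 -> 0 <= F_N_omit a N k x <= 1.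
Proof.
  intros Hx. apply prodR_in_01. intros i. destruct (Nat.eqb i k); [lra|]. apply one_sub_pow_in_01; auto.
Qed.

Lemma EU_integrand_01_le_inv_sqrt N k x : 0 < x < 1 ->
  0 <= EU_integrand_01 a j N k x <= INR (a k) ^ j * 2 ^ (j - 1) * / sqrt x.
Proof.
  intros Hx. rewrite EU_integrand_01_eq by auto.
  set (m := (j - 1)%nat).
  pose proof (lt_0_INR _ (lt_O_fact m)) as Hf.
  pose proof (pow_le (INR (a k)) j (pos_INR _)) as HA.
  pose proof (F_N_omit_in_01 N k x ltac:(lra)) as HQ.
  assert (Hxa : 0 <= x ^ a k / x <= 1).
  { pose proof (Ha k). destruct (a k) as [|n]; [lia|]. simpl.
    replace (x * x ^ n / x) with (x ^ n) by (field; lra).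
    split; [apply pow_le; lra|rewrite <- (pow1 n); apply pow_incr; lra]. }
  set (u := x ^ a k / x * F_N_omit a N k x).
  assert (Hu : 0 <= u <= 1) by (unfold u; split; nra).
  set (W := Rabs (ln x) ^ m / INR (fact m)).
  assert (HW : 0 <= W <= 2 ^ m * / sqrt x).
  { pose proof (pow_abs_ln_le m x ltac:(lra)) as Hl.
    pose proof (pow_le (Rabs (ln x)) m (Rabs_pos _)).
    unfold W, Rdiv in *. split; [apply Rmult_le_pos; [lra|left; apply Rinv_0_lt_compat; lra]|].
    apply (Rmult_le_reg_r (INR (fact m))); [lra|].
    replace (Rabs (ln x) ^ m * / INR (fact m) * INR (fact m)) with (Rabs (ln x) ^ m) by (field; lra).
    lra. }
  replace (/ INR (fact m) * (INR (a k) ^ j * x ^ a k * Rabs (ln x) ^ m / x * F_N_omit a N k x))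
    with (INR (a k) ^ j * u * W) by (unfold u, W; field; lra).
  split; [apply Rmult_le_pos; [apply Rmult_le_pos|]; lra|].
  replace (INR (a k) ^ j * 2 ^ m * / sqrt x) with (INR (a k) ^ j * 1 * (2 ^ m * / sqrt x)) by ring.
  apply Rmult_le_compat; try lra; [apply Rmult_le_pos; lra|apply Rmult_le_compat_l; lra].
Qed.

Lemma ex_improper_RInt_EU_integrand_01 N k : exists I, is_improper_RInt (EU_integrand_01 a j N k) 0 1 I.
Proof.
  apply ex_improper_RInt_inv_sqrt_bound.
  - apply ex_RInt_interior_continuous. intros x Hx. apply continuous_EU_integrand_01; lra.
  - intros x Hx. apply EU_integrand_01_le_inv_sqrt; auto.
  - exists (INR (a k) ^ j * 2 ^ (j - 1)), 0.
    split; [apply Rmult_le_pos; apply pow_le; [apply pos_INR|lra]|]. split; [lra|].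
    intros x Hx. rewrite Rplus_0_r. apply EU_integrand_01_le_inv_sqrt; auto.
Qed.

Lemma improper_RInt_I_integrand_eq_lim N0 J0 : is_improper_RInt (LF_integrand a j N0) 0 1 J0 ->
  exists I, is_improper_RInt (I_integrand a j) 0 1 I /\
    exists e : nat -> nat -> R, (forall N k, is_improper_RInt (EU_integrand_01 a j N k) 0 1 (e N k)) /\
      Un_cv (fun N => sumR (e N) N) I.
Proof.
  intros HJ0.
  assert (HLF : ex_RInt_interior (LF_integrand a j N0) 0 1)
    by (apply ex_RInt_interior_continuous; intros; apply continuous_LF_integrand; auto).
  set (D := fun x => / INR (fact (j - 1)) * LF_integrand a j N0 x).
  pose proof (is_improper_RInt_scal 0 1 _ _ (/ INR (fact (j - 1))) HLF HJ0) as HD.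
  assert (HDi : ex_RInt_interior D 0 1)
    by (apply ex_RInt_interior_continuous; intros; apply continuous_Rmult;
        [apply continuous_const|apply continuous_LF_integrand; auto]).
  assert (HIi : ex_RInt_interior (I_integrand a j) 0 1)
    by (apply ex_RInt_interior_continuous; intros; apply continuous_I_integrand; auto).
  destruct (ex_improper_RInt_le 0 1 (I_integrand a j) D _ ltac:(lra) HIi HDi
              (fun x Hx => I_integrand_le N0 x Hx) HD) as [I HI].
  set (e := fun N k => choiceR (is_improper_RInt (EU_integrand_01 a j N k) 0 1)).
  assert (He : forall N k, is_improper_RInt (EU_integrand_01 a j N k) 0 1 (e N k))
    by (intros; apply choiceR_spec, ex_improper_RInt_EU_integrand_01).
  exists I. split; [exact HI|]. exists e. split; [exact He|].
  apply (is_improper_RInt_dominated_cv 0 1 (EU_sum_integrand_01 a j) (I_integrand a j) D _ I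
                                      (/ INR (fact (j - 1)) * J0) N0); auto; intros.
  - apply ex_RInt_interior_continuous; intros; apply continuous_EU_sum_integrand_01; auto.
  - apply I_integrand_le; auto.
  - apply EU_sum_integrand_01_le; auto.
  - apply (is_improper_RInt_ext 0 1 (fun x => sumR (fun k => EU_integrand_01 a j n k x) n)).
    + intros; apply sumR_EU_integrand_01; auto.
    + apply is_improper_RInt_sumR; [lra|..]; auto.
      intros; apply ex_RInt_interior_continuous; intros; apply continuous_EU_integrand_01; lra.
  - apply RInt_EU_sum_integrand_01_cv; auto.
Qed.

End Transported.

End Convergent.

End Series.

Theorem corollary1 (a : nat -> nat) (j : nat)
  (Hpos : forall k, (0 < a k)%nat)
  (Hinf : forall M : nat, exists K, forall k, (K <= k)%nat -> (M <= a k)%nat)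
  (Hj : (2 <= j)%nat)
  (HO : exists rho C delta, 0 < rho /\ 0 < delta /\
          forall x, 1 - delta < x < 1 ->
            exists l, Un_cv (L_partial a j x) l /\
                      Rabs l <= C * Rpower (1 - x) (- rho)) :
  (exists N0 J0, improper_int
      (fun x => Lser a j x * F_N a N0 x * Rabs (ln x) ^ (j - 1) / x) 0 1 J0)
  /\
  (exists I, improper_int (I_integrand a j) 0 (x_alpha a) I /\
     exists e : nat -> nat -> R,
       (forall N k, (2 <= N)%nat -> (k < N)%nat ->
          improper_int_pinf (EU_integrand a j N k) 0 (e N k)) /\
       Un_cv (fun N => sumR (e N) N) I).
Proof.
  destruct HO as (rho & C & delta & _ & Hdelta & HO).
  destruct (L_cv_on_01_of_O_bound a j Hpos C rho delta Hdelta HO) as [HL HB].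
  destruct (INR_unbounded rho) as [N0 HN0].
  destruct (ex_improper_RInt_LF_integrand a j Hpos HL N0 C rho delta Hdelta HB ltac:(lra))
    as [J0 HJ0].
  split.
  { exists N0, J0. apply (improper_int_of_is_improper_RInt 0 1 (LF_integrand a j N0)); auto.
    intros; apply continuous_LF_integrand; auto. }
  destruct (improper_RInt_I_integrand_eq_lim a j Hpos HL ltac:(lia) N0 J0 HJ0)
    as (I & HI & e & He & Hcv).
  exists I. split.
  { rewrite (x_alpha_eq_1 a j Hpos HL). apply improper_int_of_is_improper_RInt; auto.
    intros; apply continuous_I_integrand; auto. }
  exists e. split; [|exact Hcv].
  intros N k _ _. apply improper_int_pinf_of_exp_subst; [apply continuous_EU_integrand|apply He].
Qed.
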